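(* Let $k\ge 1$, $0\le r<k$ and $n\ge1$ be integers, and let $$B_n(k,r,x;q)=\left(\begin{bmatrix} i-k+r+1\\ i-j\end{bmatrix}_q x^k+q^{(k-1)j}\begin{bmatrix} i+r+1\\ i-j+1\end{bmatrix}_q\right)_{i,j=0}^{n-1}.$$ Then $x^r\det B_n(k,r,x;q)=F^{(k)}_{kn+r}(x;q)$.
   Context: Here $q$ is an indeterminate and all quantities lie in $\mathbb{Q}(q)[x]$. The $q$-binomial coefficient is defined for integers $m$ (possibly negative) and $j$ by $\begin{bmatrix} m\\ j\end{bmatrix}_q=\prod_{t=0}^{j-1}\frac{1-q^{m-t}}{1-q^{t+1}}$ if $j\ge0$ and $0$ if $j<0$. For an integer $k\ge1$, the $q$-Fibonacci polynomials $F^{(k)}_n(x;q)$ ($n\ge0$) are defined by $F^{(k)}_n(x;q)=x^n$ for $0\le n<k$ and $F^{(k)}_{n+k}(x;q)=xF^{(k)}_{n+k-1}(x;q)+q^nF^{(k)}_n(x;q)$ for $n\ge0$. *)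

(* Q(q) is modelled as the fraction field of {poly rat},
   with q the image of the polynomial indeterminate. *)
From HB Require Import structures.
From mathcomp Require Import all_boot all_order all_algebra.
Set Implicit Arguments. Unset Strict Implicit. Unset Printing Implicit Defensive.
Import Order.TTheory GRing.Theory Num.Theory.
Local Open Scope ring_scope.

Definition Qq : fieldType := {fraction {poly rat}}.

Definition q : Qq := tofrac ('X : {poly rat}).

Definition qbinom (m j : int) : Qq :=
  match j with
  | Posz j' => \prod_(t < j') ((1 - q ^ (m - (t : nat)%:Z)) / (1 - q ^ ((t.+1)%:Z)))
  | Negz _ => 0
  end.

Definition Bmat (n k r : nat) : 'M[{poly Qq}]_n :=
  \matrix_(i < n, j < n)
    ((qbinom ((i : nat)%:Z - k%:Z + r%:Z + 1) ((i : nat)%:Z - (j : nat)%:Z))%:P * 'X^k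
     + (q ^+ ((k - 1) * j)%N * qbinom ((i : nat)%:Z + r%:Z + 1) ((i : nat)%:Z - (j : nat)%:Z + 1))%:P).

Fixpoint qfib_fuel (fuel k n : nat) : {poly Qq} :=
  match fuel with
  | 0 => 0
  | fuel'.+1 =>
      if (n < k)%N then 'X^n
      else 'X * qfib_fuel fuel' k (n - 1)%N + (q ^+ (n - k)%N)%:P * qfib_fuel fuel' k (n - k)%N
  end.

Definition qfib (k n : nat) : {poly Qq} := qfib_fuel n.+1 k n.

From HB Require Import structures.
From mathcomp Require Import all_boot all_order all_algebra.
From mathcomp Require Import ring zify.
Import GRing.Theory.
Local Open Scope ring_scope.

(* The matrix B_n is lower Hessenberg, so by Cramer's rule
   det B_n * P_0 = (-1)^n (prod_i B_{i,i+1}) * P_n for every vector P annihilated by the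
   rows of the n x (n+1) matrix extending B_n by one column.  Such a vector is
   P_j = (-1)^j q^(-(k-1) binom(j+1,2)) F_{kj+r}: using the coefficient formula
   [x^(m-kl)] F_m = q^(k binom(l,2)) [m-(k-1)l; l]_q, upper negation turns the coefficient
   of x^(ks+r) in each half of a row sum into a q-Vandermonde sum, and the two halves
   cancel.  Since P_0 = x^r and B_{i,i+1} = q^((k-1)(i+1)), the theorem follows. *)

Lemma bin2D a b : 'C(a + b, 2) = ('C(a, 2) + a * b + 'C(b, 2))%N.
Proof.
elim: b => [|b IHb]; first by rewrite addn0 muln0 !addn0.
by rewrite addnS !binS !bin1 IHb; lia.
Qed.

Lemma sum_ord_window (R : nmodType) (N s p : nat) (g : nat -> R) :
  (s + p < N)%N -> (forall j, (j < s)%N -> g j = 0) ->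
  (forall j, (s + p < j)%N -> g j = 0) ->
  \sum_(j < N) g j = \sum_(u < p.+1) g (s + u)%N.
Proof.
move=> ltN below above.
rewrite -(big_mkord xpredT) (@big_cat_nat _ _ _ s) /=; [|lia|lia].
rewrite big_nat_cond big1 ?add0r; last by move=> j /andP[/andP[_ ?] _]; apply: below.
rewrite (@big_cat_nat _ _ _ (s + p.+1)%N) /=; [|lia|lia].
rewrite [X in _ + X]big_nat_cond [X in _ + X]big1 ?addr0; last first.
  by move=> j /andP[/andP[? _] _]; apply: above; lia.
rewrite -{1}[s]add0n big_addn addKn big_mkord.
by apply: eq_bigr => u _; rewrite addnC.
Qed.

Lemma det_hessenberg_kernel (R : comNzRingType) m (f : nat -> nat -> R) (P : nat -> R) :
  (forall i j, (i.+1 < j)%N -> f i j = 0) ->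
  (forall i, (i <= m)%N -> \sum_(j < m.+2) f i j * P j = 0) ->
  \det (\matrix_(i < m.+1, j < m.+1) f i j) * P 0%N
    = (-1) ^+ m.+1 * (\prod_(i < m.+1) f i i.+1) * P m.+1.
Proof.
move=> hess kerP.
(* Read adj A *m (A *m P) = det A *: P at the first entry; the entries
   (A *m P) i = - f i m.+1 * P m.+1 vanish except for i = m. *)
set A := \matrix_(i < m.+1, j < m.+1) f i j.
have AP : A *m \col_j P j = \col_i (- (f i m.+1 * P m.+1)).
  apply/matrixP => i j; rewrite !mxE.
  move/eqP: (kerP i (ltn_ord i)); rewrite big_ord_recr addr_eq0 => /eqP <-.
  by apply: eq_bigr => l _; rewrite !mxE.
have minor : \det (row' ord_max (col' ord0 A)) = \prod_(i < m) f i i.+1.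
  rewrite det_trig; last first.
    by apply/is_trig_mxP => -[i lti] -[j ltj] /= ltij; rewrite !mxE hess //= /bump /=; lia.
  by apply: eq_bigr => i _; rewrite !mxE /= /bump /= leqNgt ltn_ord.
have /(congr1 (fun M : 'cV[R]_m.+1 => M ord0 ord0)) :=
  mulmxA (\adj A) A (\col_j P j).
rewrite mul_adj_mx mul_scalar_mx AP !mxE (bigD1 ord_max) //= big1 ?addr0; last first.
  move=> l neqlm; rewrite !mxE hess ?mul0r ?oppr0 ?mulr0 //.
  by move: neqlm (ltn_ord l); rewrite -(inj_eq val_inj) /=; lia.
move=> <-; rewrite !mxE /cofactor minor big_ord_recr /= addn0 exprS.
by rewrite mulrN mulN1r !mulNr !mulrA.
Qed.

Lemma q_neq0 : q != 0.
Proof. by rewrite /q tofrac_eq0 polyX_eq0. Qed.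

Lemma expq_neq1 n : (0 < n)%N -> q ^+ n != 1.
Proof.
move=> n_gt0; rewrite /q -tofracXn -tofrac1 tofrac_eq.
apply/eqP => /(congr1 (size : {poly rat} -> nat)).
by rewrite size_polyXn size_poly1; case: n n_gt0.
Qed.

Lemma expqzD (a b : int) : q ^ (a + b) = q ^ a * q ^ b.
Proof. by rewrite expfzDr // q_neq0. Qed.

Definition qfalling (m : int) (l : nat) : Qq := \prod_(t < l) (1 - q ^ (m - t%:Z)).
Definition qfactorial (l : nat) : Qq := \prod_(t < l) (1 - q ^+ t.+1).

Lemma qbinomE m (l : nat) : qbinom m l = qfalling m l / qfactorial l.
Proof. by rewrite /qbinom /qfalling /qfactorial big_split /= prodfV. Qed.

Lemma qfactorial_neq0 l : qfactorial l != 0.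
Proof. by apply/prodf_neq0 => t _; rewrite subr_eq0 eq_sym expq_neq1. Qed.

Lemma qfactorialS l : qfactorial l.+1 = qfactorial l * (1 - q ^+ l.+1).
Proof. by rewrite /qfactorial big_ord_recr. Qed.

Lemma qfallingSr m l : qfalling m l.+1 = qfalling m l * (1 - q ^ (m - l%:Z)).
Proof. by rewrite /qfalling big_ord_recr. Qed.

Lemma qfallingSl m l : qfalling m l.+1 = (1 - q ^ m) * qfalling (m - 1) l.
Proof.
rewrite /qfalling big_ord_recl subr0; congr (_ * _).
by apply: eq_bigr => t _; rewrite lift0 /=; congr (1 - q ^ _); lia.
Qed.

Lemma qbinom0 m : qbinom m 0 = 1.
Proof. by rewrite qbinomE /qfalling /qfactorial !big_ord0 divr1. Qed.

Lemma qbinom_neg m (z : int) : (z < 0)%R -> qbinom m z = 0.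
Proof. by case: z. Qed.

Lemma qbinom_small (m l : nat) : (m < l)%N -> qbinom m l = 0.
Proof.
move=> ltml; rewrite qbinomE /qfalling (bigD1 (Ordinal ltml)) //=.
by rewrite subrr expr0z subrr !mul0r.
Qed.

Lemma qbinomSr m (l : nat) :
  qbinom m l.+1 = qbinom m l * (1 - q ^ (m - l%:Z)) / (1 - q ^+ l.+1).
Proof.
rewrite !qbinomE qfallingSr qfactorialS invfM.
by move: (qfalling _ _) (qfactorial _) (1 - _) (1 - _)^-1 => A D a b; ring.
Qed.

Lemma qbinomSl m (l : nat) :
  qbinom m l.+1 = (1 - q ^ m) / (1 - q ^+ l.+1) * qbinom (m - 1) l.
Proof.
rewrite !qbinomE qfallingSl qfactorialS invfM.
by move: (qfalling _ _) (qfactorial _) (1 - _) (1 - _)^-1 => A D a b; ring.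
Qed.

Lemma qbinom_pascal m (l : nat) :
  qbinom m l.+1 = qbinom (m - 1) l.+1 + q ^ (m - l.+1%:Z) * qbinom (m - 1) l.
Proof.
rewrite qbinomSl qbinomSr.
have -> : m - 1 - l%:Z = m - l.+1%:Z by lia.
have -> : q ^ m = q ^ (m - l.+1%:Z) * q ^+ l.+1.
  by rewrite -[q ^+ _]/(q ^ l.+1%:Z) -expqzD subrK.
have : 1 - q ^+ l.+1 != 0 by rewrite subr_eq0 eq_sym expq_neq1.
move: (q ^ _) (q ^+ l.+1) (qbinom _ l) => e Q B nzQ.
have -> : 1 - e * Q = (1 - e) + e * (1 - Q) by ring.
by rewrite mulrDl mulfK //; ring.
Qed.

Lemma qbinom_upper_neg m (l : nat) :
  qbinom m l = (-1) ^+ l * q ^ (l%:Z * m - 'C(l, 2)%:Z) * qbinom (l%:Z - m - 1) l.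
Proof.
elim: l => [|l IHl]; first by rewrite !qbinom0 mul0r subrr expr0z !mulr1.
rewrite qbinomSr IHl qbinomSl.
have -> : l.+1%:Z - m - 1 - 1 = l%:Z - m - 1 by lia.
have -> : l.+1%:Z - m - 1 = - (m - l%:Z) by lia.
have -> : q ^ (l.+1%:Z * m - 'C(l.+1, 2)%:Z)
          = q ^ (l%:Z * m - 'C(l, 2)%:Z) * q ^ (m - l%:Z).
  by rewrite -expqzD binS bin1; congr (q ^ _); lia.
rewrite -invr_expz [(-1) ^+ l.+1]exprS.
have : q ^ (m - l%:Z) != 0 by rewrite expfz_neq0 // q_neq0.
move: (q ^ (m - l%:Z)) (1 - q ^+ l.+1) => t d nzt.
have -> : 1 - t^-1 = - t^-1 * (1 - t) by rewrite mulrBr mulr1 mulNr mulVf ?opprK // addrC.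
move: (t^-1) (mulVf nzt) => u ut1.
by rewrite -[LHS]mulr1 -[X in _ * X = _]ut1; ring.
Qed.

Definition qvandermonde_sum (a b : int) (p : nat) : Qq :=
  \sum_(u < p.+1) qbinom a (p - u)%N * qbinom b u * q ^ (u%:Z * (a - p%:Z + u%:Z)).

Lemma qvandermonde_sum0 a b : qvandermonde_sum a b 0 = 1.
Proof. by rewrite /qvandermonde_sum big_ord1 !qbinom0 mul0r expr0z !mulr1. Qed.

Lemma qvandermonde_sum_r0 a p : qvandermonde_sum a 0 p = qbinom a p.
Proof.
rewrite /qvandermonde_sum big_ord_recl subn0 qbinom0 mul0r expr0z !mulr1.
by rewrite big1 ?addr0 // => u _; rewrite qbinom_small // mulr0 mul0r.
Qed.

Lemma qvandermonde_sumS a b p :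
  qvandermonde_sum a b p.+1 =
  qvandermonde_sum a (b - 1) p.+1 + q ^ (a + b - p.+1%:Z) * qvandermonde_sum a (b - 1) p.
Proof.
rewrite /qvandermonde_sum big_ord_recl [in RHS]big_ord_recl !qbinom0 -[in RHS]addrA.
congr (_ + _); rewrite mulr_sumr -big_split.
apply: eq_bigr => u _; rewrite lift0 subSS qbinom_pascal.
have E : q ^ (b - u.+1%:Z) * q ^ (u.+1%:Z * (a - p.+1%:Z + u.+1%:Z))
          = q ^ (a + b - p.+1%:Z) * q ^ (u%:Z * (a - p%:Z + u%:Z)).
  by rewrite -!expqzD; congr (q ^ _); lia.
by rewrite mulrDr mulrDl; congr (_ + _); rewrite [RHS]mulrCA -E; ring.
Qed.

Lemma qvandermonde a b p : qvandermonde_sum a b p = qbinom (a + b) p.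
Proof.
elim/int_rect: b p => [|n IHn|n IHn] p; first by rewrite addr0 qvandermonde_sum_r0.
  case: p => [|p]; first by rewrite qvandermonde_sum0 qbinom0.
  rewrite qvandermonde_sumS (_ : n.+1%:Z - 1 = n) ?IHn; last lia.
  by rewrite [in RHS]qbinom_pascal (_ : a + n.+1%:Z - 1 = a + n%:Z) //; lia.
elim: p => [|p IHp]; first by rewrite qvandermonde_sum0 qbinom0.
have := qvandermonde_sumS a (- n%:Z) p.
rewrite (_ : - n%:Z - 1 = - n.+1%:Z); last lia.
rewrite IHn IHp qbinom_pascal (_ : a - n%:Z - 1 = a - n.+1%:Z); last lia.
by move/addIr.
Qed.

Section QFibonacci.

Variable k : nat.
Hypothesis k_gt0 : (0 < k)%N.

Lemma qfib_fuel_enough f1 f2 n :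
  (n < f1)%N -> (n < f2)%N -> qfib_fuel f1 k n = qfib_fuel f2 k n.
Proof.
elim: f1 f2 n => [|f1 IHf] [|f2] n //= ltn1 ltn2.
by case: ltnP => // lekn; rewrite (IHf f2 (n - 1)%N) ?(IHf f2 (n - k)%N) //; lia.
Qed.

Lemma qfibE n : qfib k n =
  if (n < k)%N then 'X^n else 'X * qfib k (n - 1) + (q ^+ (n - k))%:P * qfib k (n - k).
Proof.
rewrite /qfib /=; case: ltnP => // lekn.
by rewrite (qfib_fuel_enough n (n - 1).+1) ?(qfib_fuel_enough n (n - k).+1) //; lia.
Qed.

Lemma coef_qfib_eq0 n d :
  (forall l, (k * l <= n)%N -> d != (n - k * l)%N) -> (qfib k n)`_d = 0.
Proof.
elim/ltn_ind: n d => n IHn d offd; rewrite qfibE; case: ltnP => [ltnk|lekn].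
  by rewrite coefXn; move: (offd 0%N); rewrite muln0 subn0 => /(_ isT)/negbTE ->.
rewrite coefD coefXM coefCM (IHn (n - k)%N) ?mulr0 ?addr0; first last.
- by move=> l lel; rewrite (_ : (n - k - k * l = n - k * l.+1)%N) ?offd //; lia.
- lia.
case: eqP => // nzd; apply: IHn => [|l lel]; first lia.
by apply/eqP => eqd; have /eqP := offd l ltac:(lia); apply; lia.
Qed.

Lemma coef_qfib n l : (k * l <= n)%N ->
  (qfib k n)`_(n - k * l) = q ^+ (k * 'C(l, 2)) * qbinom (n%:Z - ((k - 1) * l)%N%:Z) l.
Proof.
elim/ltn_ind: n l => n IHn l lekl; rewrite qfibE; case: ltnP => [ltnk|lekn].
  have -> : l = 0%N by nia.
  by rewrite muln0 subn0 coefXn eqxx qbinom0 expr0 mulr1.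
rewrite coefD coefXM coefCM.
case: l lekl => [|l] lekl.
  rewrite muln0 subn0 (coef_qfib_eq0 (n - k)) => [|l _]; last by apply/eqP; lia.
  rewrite mulr0 addr0 (_ : (n == 0%N) = false); last by apply/eqP; lia.
  by have := IHn (n - 1)%N _ 0%N; rewrite muln0 subn0 subn1 !qbinom0 => ->; [|lia|lia].
set N := n%:Z - ((k - 1) * l.+1)%N%:Z.
have -> : (if (n - k * l.+1)%N == 0%N then 0 else (qfib k (n - 1))`_(n - k * l.+1).-1)
          = q ^+ (k * 'C(l.+1, 2)) * qbinom (N - 1) l.+1.
  case: eqP => [eq0|ne0].
    by rewrite (_ : N - 1 = l%:Z) ?qbinom_small ?mulr0 //; nia.
  rewrite (_ : (n - k * l.+1).-1 = (n - 1) - k * l.+1)%N ?IHn; [|lia|lia|lia].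
  by congr (_ * qbinom _ _); lia.
rewrite (_ : (n - k * l.+1 = (n - k) - k * l)%N) ?IHn; [|lia|lia|nia].
rewrite [in RHS]qbinom_pascal mulrDr mulrA -exprD [in RHS]mulrA.
congr (_ + _ * qbinom _ _); last by nia.
by rewrite !exprnP -expqzD; congr (q ^ _); rewrite binS bin1; nia.
Qed.

End QFibonacci.

Section Determinant.

Variables k r : nat.
Hypotheses (k_gt0 : (0 < k)%N) (ltrk : (r < k)%N).

Lemma coef_qfib_shift s u :
  (qfib k (k * (s + u) + r))`_(k * s + r) = q ^+ (k * 'C(u, 2)) * qbinom (k * s + r + u)%N u.
Proof.
have := @coef_qfib k k_gt0 (k * (s + u) + r) u ltac:(nia).
rewrite (_ : (k * (s + u) + r - k * u = k * s + r)%N) => [->|]; last nia.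
by congr (_ * qbinom _ _); nia.
Qed.

Lemma coef_qfib_lt j s : (j < s)%N -> (qfib k (k * j + r))`_(k * s + r) = 0.
Proof. by move=> ltjs; apply: coef_qfib_eq0 => // l _; apply/eqP; nia. Qed.

Lemma coef_qfib_mod j d : (d %% k != r)%N -> (qfib k (k * j + r))`_d = 0.
Proof.
move=> neqr; apply: coef_qfib_eq0 => // l lel; apply: contraNneq neqr => ->.
have lelj : (l <= j)%N.
  by rewrite -ltnS -(ltn_pmul2l k_gt0) mulnS; lia.
by rewrite (_ : (k * j + r - k * l = (j - l) * k + r)%N) ?modnMDl ?modn_small //; nia.
Qed.

(* With e = 1 this is the kernel vector; e = 0 absorbs the factor q^((k-1)j) of the
   constant part of the Hessenberg entries. *)
Definition qfib_weight (e j : nat) : Qq := (-1) ^+ j * q ^ (- ((k - 1) * 'C(j + e, 2))%N%:Z).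

Lemma sum_coef_qfib (c e s N : nat) : (c < N)%N ->
  \sum_(j < N) qbinom (c%:Z + r%:Z - ((k - 1) * e)%N%:Z) (c%:Z - j%:Z) * qfib_weight e j
                * (qfib k (k * j + r))`_(k * s + r)
  = qfib_weight e s * qbinom (c%:Z - ((k - 1) * e)%N%:Z - (k * s)%N%:Z - 1) (c%:Z - s%:Z).
Proof.
move=> ltcN; have [lesc|ltcs] := leqP s c; last first.
  rewrite qbinom_neg ?mulr0; last lia.
  apply: big1 => j _; have [ltjs|lesj] := ltnP j s; first by rewrite coef_qfib_lt ?mulr0.
  by rewrite qbinom_neg ?mul0r //; lia.
rewrite (@sum_ord_window _ N s (c - s) (fun j => qbinom _ (c%:Z - j%:Z) * qfib_weight e j
                                          * (qfib k (k * j + r))`_(k * s + r))); first last.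
- by move=> j ltj; rewrite qbinom_neg ?mul0r //; lia.
- by move=> j ltj; rewrite coef_qfib_lt ?mulr0.
- lia.
rewrite (subzn lesc).
rewrite (_ : _ - 1 = c%:Z + r%:Z - ((k - 1) * e)%N%:Z + (- (k * s + r)%N%:Z - 1)); last lia.
rewrite -qvandermonde /qvandermonde_sum mulr_sumr.
apply: eq_bigr => u _; have := ltn_ord u => ltu.
rewrite coef_qfib_shift (qbinom_upper_neg _ u).
rewrite (_ : u%:Z - (k * s + r + u)%N%:Z - 1 = - (k * s + r)%N%:Z - 1); last lia.
rewrite (_ : c%:Z - (s + u)%N%:Z = (c - s - u)%N); last lia.
rewrite /qfib_weight exprD [q ^+ _]exprnP.
set QA := qbinom _ (c - s - u)%N; set QB := qbinom _ u.
set xs := q ^ (- ((k - 1) * 'C(s + e, 2))%N%:Z).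
set xu := q ^ (- ((k - 1) * 'C(s + u + e, 2))%N%:Z).
set wu := q ^ (k * 'C(u, 2))%N%:Z.
set zu := q ^ (u%:Z * _ - _).
set yu := q ^ (u%:Z * _).
have power : xu * wu * zu = xs * yu.
  rewrite -!expqzD; congr (q ^ _); rewrite addnAC bin2D; nia.
transitivity ((-1) ^+ s * ((-1) ^+ u) ^+ 2 * (xu * wu * zu) * (QA * QB)); first by ring.
by rewrite sqrr_sign power; ring.
Qed.

Definition hessenberg_entry (i j : nat) : {poly Qq} :=
  (qbinom (i%:Z - k%:Z + r%:Z + 1) (i%:Z - j%:Z))%:P * 'X^k
  + (q ^+ ((k - 1) * j) * qbinom (i%:Z + r%:Z + 1) (i%:Z - j%:Z + 1))%:P.

Definition qfib_kernel (j : nat) : {poly Qq} := (qfib_weight 1 j)%:P * qfib k (k * j + r).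

Lemma coef_hessenberg_kernel i j d : (hessenberg_entry i j * qfib_kernel j)`_d =
  qbinom (i%:Z + r%:Z - ((k - 1) * 1)%N%:Z) (i%:Z - j%:Z) * qfib_weight 1 j
    * (if (d < k)%N then 0 else (qfib k (k * j + r))`_(d - k))
  + qbinom (i.+1%:Z + r%:Z - ((k - 1) * 0)%N%:Z) (i.+1%:Z - j%:Z) * qfib_weight 0 j
    * (qfib k (k * j + r))`_d.
Proof.
rewrite /hessenberg_entry /qfib_kernel mulrDl coefD; congr (_ + _).
  rewrite -mulrA mulrCA coefXnM mulrA -polyCM coefCM.
  by case: ifP => _; rewrite ?mulr0 //; congr (qbinom _ _ * _ * _); lia.
rewrite mulrA -polyCM coefCM; congr (_ * _).
rewrite (_ : i.+1%:Z + r%:Z - ((k - 1) * 0)%N%:Z = i%:Z + r%:Z + 1); last lia.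
rewrite (_ : i.+1%:Z - j%:Z = i%:Z - j%:Z + 1); last lia.
rewrite mulrAC [RHS]mulrC.
congr (_ * _); rewrite /qfib_weight mulrCA [q ^+ _]exprnP -expqzD.
by congr (_ * q ^ _); rewrite addn0 addn1 binS bin1; lia.
Qed.

Lemma sum_hessenberg_kernel i N : (i.+1 < N)%N ->
  \sum_(j < N) hessenberg_entry i j * qfib_kernel j = 0.
Proof.
move=> ltN; apply/polyP => d; rewrite coef0 coef_sum.
under eq_bigr do rewrite coef_hessenberg_kernel.
rewrite big_split /=.
have [dmod|dmod] := eqVneq (d %% k)%N r; last first.
  rewrite big1 ?add0r => [|j _]; last first.
    case: ltnP => ledk; rewrite ?mulr0 // coef_qfib_mod ?mulr0 //.
    by rewrite -(subnK ledk) modnDr in dmod.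
  by rewrite big1 // => j _; rewrite coef_qfib_mod ?mulr0.
have -> : d = (k * (d %/ k) + r)%N by rewrite {1}(divn_eq d k) dmod mulnC.
case: (d %/ k)%N => [|s].
  rewrite muln0 add0n ltrk big1 ?add0r => [|j _]; last by rewrite mulr0.
  have := @sum_coef_qfib i.+1 0 0 N ltN; rewrite [(k * 0)%N]muln0 add0n => ->.
  by rewrite (_ : _ - 1 = i%:Z) ?subr0 ?qbinom_small ?mulr0 //; lia.
rewrite (_ : (k * s.+1 + r < k)%N = false); last by apply/negbTE; rewrite -leqNgt; nia.
rewrite (_ : (k * s.+1 + r - k = k * s + r)%N); last nia.
rewrite !sum_coef_qfib //; last lia.
have -> : qfib_weight 0 s.+1 = - qfib_weight 1 s.
  by rewrite /qfib_weight exprS addn0 addn1 mulN1r mulNr.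
rewrite mulNr; apply/eqP; rewrite subr_eq0; apply/eqP; congr (_ * qbinom _ _); lia.
Qed.

Lemma hessenberg_entry_eq0 i j : (i.+1 < j)%N -> hessenberg_entry i j = 0.
Proof.
by move=> ltij; rewrite /hessenberg_entry !qbinom_neg ?mulr0 ?mul0r ?addr0 //; lia.
Qed.

Lemma prod_hessenberg_superdiag m :
  \prod_(i < m) hessenberg_entry i i.+1 = (q ^+ ((k - 1) * 'C(m.+1, 2)))%:P.
Proof.
rewrite -bin2_sum big_nat_recl // big_mkord add0n big_distrr -prodrXr rmorph_prod.
apply: eq_bigr => i _; rewrite /hessenberg_entry qbinom_neg; last lia.
by rewrite (_ : i%:Z - i.+1%:Z + 1 = 0); [rewrite qbinom0 polyC0 mul0r add0r mulr1|lia].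
Qed.

Lemma qfib_kernel0 : qfib_kernel 0 = 'X^r.
Proof.
rewrite /qfib_kernel /qfib_weight muln0 !add0n (@qfibE k k_gt0) ltrk bin_small // muln0.
by rewrite expr0 expr0z mulr1 polyC1 mul1r.
Qed.

Lemma qfib_weight1K j : (-1) ^+ j * q ^+ ((k - 1) * 'C(j.+1, 2)) * qfib_weight 1 j = 1.
Proof.
rewrite /qfib_weight addn1 mulrACA -expr2 sqrr_sign mul1r exprnP -expqzD.
by rewrite addrN expr0z.
Qed.

End Determinant.

Theorem theorem6 (k r n : nat) (hk : (1 <= k)%N) (hr : (r < k)%N) (hn : (1 <= n)%N) :
  'X^r * \det (Bmat n k r) = qfib k (k * n + r).
Proof.
case: n hn => [//|m] _.
have -> : Bmat m.+1 k r = \matrix_(i < m.+1, j < m.+1) hessenberg_entry k r i j.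
  by apply/matrixP => i j; rewrite !mxE.
have := @det_hessenberg_kernel _ m _ _ (@hessenberg_entry_eq0 k r hk hr)
  (fun i lei => @sum_hessenberg_kernel k r hk hr i m.+2 lei).
rewrite (@qfib_kernel0 k r hk hr) mulrC => ->.
rewrite prod_hessenberg_superdiag // /qfib_kernel mulrA.
rewrite -[(-1) ^+ m.+1 : {poly Qq}](rmorph_sign (polyC : Qq -> {poly Qq})) -!polyCM.
by rewrite qfib_weight1K polyC1 mul1r.
Qed.
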